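(* Let $\iota:B\to A$ be an injective homomorphism of groups such that $\iota(B)$ is normal in $A$, and let $q:A\to B$ satisfy (ZL1), (ZL2), (ZL3). Then there is a subgroup $X$ of $A$ such that $A$ is the internal semidirect product $\iota(B)\rtimes X$ (i.e. $\iota(B)\trianglelefteq A$, $\iota(B)X=A$, $\iota(B)\cap X=\{1_A\}$) and $q$ is the projection onto the first factor: $q(\iota(b)x)=b$ for all $b\in B$, $x\in X$.
   Context: For a homomorphism $\iota:B\to A$, conditions on $q:A\to B$: (ZL1) $q(1_A)=1_B$; (ZL2) $q(\iota(b)a)=b\,q(a)$ for all $a\in A,b\in B$; (ZL3) $q(aa')=q(a\,\iota(q(a')))$ for all $a,a'\in A$. These maps are exactly the $\mathsf T^l_\iota$-algebra structures on $(B,m_B)$ (algebras for the monad $A\otimes_B-$ on left $B$-sets induced by $\iota$). *)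

Record Group := {
  carrier :> Type;
  gmul : carrier -> carrier -> carrier;
  gone : carrier;
  ginv : carrier -> carrier;
  gmul_assoc : forall x y z, gmul x (gmul y z) = gmul (gmul x y) z;
  gmul_1l : forall x, gmul gone x = x;
  gmul_1r : forall x, gmul x gone = x;
  gmul_Vl : forall x, gmul (ginv x) x = gone;
  gmul_Vr : forall x, gmul x (ginv x) = gone
}.

Arguments gmul {g} _ _.
Arguments gone {g}.
Arguments ginv {g} _.

Definition is_hom (B A : Group) (f : B -> A) : Prop :=
  forall b b' : B, f (gmul b b') = gmul (f b) (f b').

Definition injective_map {X Y : Type} (f : X -> Y) : Prop :=
  forall x y, f x = f y -> x = y.

Definition image_normal (B A : Group) (f : B -> A) : Prop :=
  forall (a : A) (b : B), exists b' : B, gmul (gmul a (f b)) (ginv a) = f b'.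

Definition is_subgroup (A : Group) (X : A -> Prop) : Prop :=
  X gone /\ (forall x y, X x -> X y -> X (gmul x y)) /\ (forall x, X x -> X (ginv x)).

Definition ZL1 (B A : Group) (iota : B -> A) (q : A -> B) : Prop :=
  q gone = gone.
Definition ZL2 (B A : Group) (iota : B -> A) (q : A -> B) : Prop :=
  forall (a : A) (b : B), q (gmul (iota b) a) = gmul b (q a).
Definition ZL3 (B A : Group) (iota : B -> A) (q : A -> B) : Prop :=
  forall a a' : A, q (gmul a a') = q (gmul a (iota (q a'))).

Definition internal_semidirect (B A : Group) (iota : B -> A) (X : A -> Prop) : Prop :=
  image_normal B A iota /\
  (forall a : A, exists (b : B) (x : A), X x /\ a = gmul (iota b) x) /\
  (forall a : A, (exists b : B, a = iota b) -> X a -> a = gone).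


(* The complement is the "kernel" X = {a | q a = 1} of q.  From (ZL1) and
   (ZL2), q is a retraction of iota: q (iota b) = b.  By (ZL3), right
   multiplication by an element of X does not change q, so X is closed under
   products, and q (iota b * x) = b * q x = b for x in X, which is the
   projection property.  Every a splits as iota (q a) * (iota (q a)^-1 * a)
   with the second factor in X, and an element iota b of X satisfies
   b = q (iota b) = 1.  Closure of X under inverses is the one step that uses
   normality: writing x * iota c = iota c' * x with c = q x^-1, both sides
   are evaluated with q to get c' = 1, whence iota c = 1 and c = 1. *)

Lemma gmul_cancel_l (G : Group) (x y z : G) : gmul x y = gmul x z -> y = z.
Proof.
  intro H. rewrite <- (gmul_1l G y), <- (gmul_1l G z), <- (gmul_Vl G x).
  rewrite <- !gmul_assoc, H. reflexivity.
Qed.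

Lemma conj_eq1 (G : Group) (x y : G) : gmul (gmul x y) (ginv x) = gone -> y = gone.
Proof.
  intro H. apply (gmul_cancel_l G x). rewrite gmul_1r.
  rewrite <- (gmul_1r G (gmul x y)), <- (gmul_Vl G x), gmul_assoc, H, gmul_1l.
  reflexivity.
Qed.

Lemma hom_one (B A : Group) (f : B -> A) : is_hom B A f -> f gone = gone.
Proof.
  intro h. apply (gmul_cancel_l A (f gone)). rewrite <- h, !gmul_1r. reflexivity.
Qed.

Lemma normal_image_swap (B A : Group) (f : B -> A) (x : A) (c : B) :
  image_normal B A f ->
  exists c', gmul (gmul x (f c)) (ginv x) = f c' /\ gmul x (f c) = gmul (f c') x.
Proof.
  intro nor. destruct (nor x c) as [c' hc']. exists c'. split; [exact hc'|].
  rewrite <- hc', <- !gmul_assoc, gmul_Vl, gmul_1r. reflexivity.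
Qed.

Section ZLRetraction.

Variables (B A : Group) (iota : B -> A) (q : A -> B).
Hypotheses (hom : is_hom B A iota) (z1 : ZL1 B A iota q)
  (z2 : ZL2 B A iota q) (z3 : ZL3 B A iota q).

Definition kerq (a : A) : Prop := q a = gone.

Lemma q_iota (b : B) : q (iota b) = b.
Proof. rewrite <- (gmul_1r A (iota b)), z2, z1, gmul_1r. reflexivity. Qed.

Lemma q_mul_kerq (a x : A) : kerq x -> q (gmul a x) = q a.
Proof. intro hx. rewrite z3, hx, (hom_one B A iota hom), gmul_1r. reflexivity. Qed.

Lemma q_projection (b : B) (x : A) : kerq x -> q (gmul (iota b) x) = b.
Proof. intro hx. rewrite z2, hx, gmul_1r. reflexivity. Qed.

Lemma kerq_mul (x y : A) : kerq x -> kerq y -> kerq (gmul x y).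
Proof. intros hx hy. unfold kerq. rewrite q_mul_kerq; assumption. Qed.

Hypothesis nor : image_normal B A iota.

Lemma kerq_inv (x : A) : kerq x -> kerq (ginv x).
Proof.
  intro hx. unfold kerq. set (c := q (ginv x)).
  destruct (normal_image_swap B A iota x c nor) as [c' [hconj hswap]].
  assert (hc' : c' = gone).
  { rewrite <- (q_projection c' x hx), <- hswap. unfold c.
    rewrite <- z3, gmul_Vr. exact z1. }
  rewrite hc', (hom_one B A iota hom) in hconj.
  rewrite <- (q_iota c), (conj_eq1 A x (iota c) hconj). exact z1.
Qed.

Lemma kerq_subgroup : is_subgroup A kerq.
Proof. split; [exact z1 | split; [exact kerq_mul | exact kerq_inv]]. Qed.

Lemma kerq_factorization (a : A) :
  exists (b : B) (x : A), kerq x /\ a = gmul (iota b) x.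
Proof.
  exists (q a), (gmul (iota (ginv (q a))) a). split.
  - unfold kerq. rewrite z2, gmul_Vl. reflexivity.
  - rewrite gmul_assoc, <- hom, gmul_Vr, (hom_one B A iota hom), gmul_1l.
    reflexivity.
Qed.

Lemma kerq_image_trivial (a : A) : (exists b, a = iota b) -> kerq a -> a = gone.
Proof.
  intros [b ->] hb. unfold kerq in hb. rewrite q_iota in hb.
  rewrite hb. exact (hom_one B A iota hom).
Qed.

End ZLRetraction.

Theorem proposition4p5 (B A : Group) (iota : B -> A) (q : A -> B) :
  is_hom B A iota -> injective_map iota -> image_normal B A iota ->
  ZL1 B A iota q -> ZL2 B A iota q -> ZL3 B A iota q ->
  exists X : A -> Prop,
    is_subgroup A X /\ internal_semidirect B A iota X /\
    (forall (b : B) (x : A), X x -> q (gmul (iota b) x) = b).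
Proof.
  intros hom _ nor z1 z2 z3.
  exists (kerq B A q). split; [|split].
  - exact (kerq_subgroup B A iota q hom z1 z2 z3 nor).
  - split; [exact nor | split].
    + exact (kerq_factorization B A iota q hom z2).
    + exact (kerq_image_trivial B A iota q hom z1 z2).
  - exact (q_projection B A iota q z2).
Qed.
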